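(* Let $q=4$. The groups $G_4$ and $G_4^*$ have the same orbits on planes and the same orbits on points. Consequently the $G_4$-orbits of planes are the sets of $\Gamma$-planes ($5$), $2_{\mathscr C}$-planes ($20$), $3_{\mathscr C}$-planes ($10$), $\overline{1_{\mathscr C}}$-planes ($30$), $0_{\mathscr C}$-planes ($20$), and the $G_4$-orbits of points are the sets of $\mathscr C$-points ($5$), T-points ($20$), $3_\Gamma$-points ($10$), $1_\Gamma$-points ($30$), $0_\Gamma$-points ($20$).
   Context: Notation. $\mathbb F_q$ is the field with $q$ elements, $\mathbb F_q^+=\mathbb F_q\cup\{\infty\}$. Points of $\mathrm{PG}(3,q)$ are written $\mathbf P(x_0,x_1,x_2,x_3)$ with $x$ a nonzero row vector up to scalars; $\boldsymbol\pi(c_0,c_1,c_2,c_3)$ is the plane $c_0x_0+c_1x_1+c_2x_2+c_3x_3=0$. Put $P(t)=\mathbf P(t^3,t^2,t,1)$ for $t\in\mathbb F_q$, $P(\infty)=\mathbf P(1,0,0,0)$, and $\mathscr C=\{P(t):t\in\mathbb F_q^+\}$ (the twisted cubic). The osculating planes are $\pi_{\rm osc}(t)=\boldsymbol\pi(1,-3t,3t^2,-t^3)$ ($t\in\mathbb F_q$) and $\pi_{\rm osc}(\infty)=\boldsymbol\pi(0,0,0,1)$; these $q+1$ planes are called $\Gamma$-planes. The tangent at $P(t)$, $t\in\mathbb F_q$, is the line through $P(t)$ and $\mathbf P(3t^2,2t,1,0)$; the tangent at $P(\infty)$ is the line through $\mathbf P(1,0,0,0)$ and $\mathbf P(0,1,0,0)$.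 $G_q$ is the group of all projectivities of $\mathrm{PG}(3,q)$ mapping $\mathscr C$ onto itself. For $a,b,c,d\in\mathbb F_q$, $ad-bc\ne0$, let $$M(a,b,c,d)=\begin{pmatrix} a^3&a^2c&ac^2&c^3\\ 3a^2b&a^2d+2abc&bc^2+2acd&3c^2d\\ 3ab^2&b^2c+2abd&ad^2+2bcd&3cd^2\\ b^3&b^2d&bd^2&d^3\end{pmatrix};$$ the projectivities $\mathbf P(x)\mapsto\mathbf P(xM(a,b,c,d))$ form the subgroup $G_q^*\cong PGL(2,q)$ of $G_q$ (critical subgroup). Plane types: $\Gamma$-plane = osculating plane; $\overline{1_{\mathscr C}}$-plane = non-osculating plane meeting $\mathscr C$ in exactly one point; $d_{\mathscr C}$-plane ($d\in\{0,2,3\}$) = plane meeting $\mathscr C$ in exactly $d$ points. Point types (for $q\not\equiv0\pmod 3$): $\mathscr C$-point = point of $\mathscr C$; T-point = point off $\mathscr C$ on some tangent; for $\mu\in\{0,1,3\}$, $\mu_\Gamma$-point = point off $\mathscr C$, on no tangent, lying on exactly $\mu$ $\Gamma$-planes. *)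

(* Twisted cubic in PG(3,q), q = #|F|. *)
From HB Require Import structures.
From mathcomp Require Import all_boot all_order all_algebra.
Set Implicit Arguments. Unset Strict Implicit. Unset Printing Implicit Defensive.
Import GRing.Theory.
Local Open Scope ring_scope.

Inductive plane_kind := GammaPl | TwoC | ThreeC | OneBarC | ZeroC.
Inductive point_kind := CPt | TPt | ThreeG | OneG | ZeroG.

Section TwistedCubic.
Variable F : finFieldType.

(* vectors of F^4 (row vectors); points and planes are nonzero vectors up to scalars *)
Definition vec4 (a b c d : F) : 'rV[F]_4 := \row_(i < 4) nth 0 [:: a; b; c; d] i.

Definition proj_eq (x y : 'rV[F]_4) : bool := [exists k : F, (k != 0) && (y == k *: x)].

Definition dot (x c : 'rV[F]_4) : F := \sum_(i < 4) x 0 i * c 0 i.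
Definition incid (x c : 'rV[F]_4) : bool := dot x c == 0.

(* F_q^+ = option F, with None = infinity *)
Definition Pt (t : option F) : 'rV[F]_4 :=
  match t with Some t => vec4 (t ^+ 3) (t ^+ 2) t 1 | None => vec4 1 0 0 0 end.

(* second point spanning the tangent at P(t) *)
Definition Tdir (t : option F) : 'rV[F]_4 :=
  match t with Some t => vec4 (3%:R * t ^+ 2) (2%:R * t) 1 0 | None => vec4 0 1 0 0 end.

(* osculating plane pi_osc(t) *)
Definition Osc (t : option F) : 'rV[F]_4 :=
  match t with
  | Some t => vec4 1 (- (3%:R * t)) (3%:R * t ^+ 2) (- t ^+ 3)
  | None => vec4 0 0 0 1 end.

Definition on_C (x : 'rV[F]_4) : bool := [exists t, proj_eq (Pt t) x].

Definition on_tangent (x : 'rV[F]_4) : bool :=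
  [exists t, [exists a : F, [exists b : F, x == a *: Pt t + b *: Tdir t]]].

Definition in_Gq (A : 'M[F]_4) : Prop :=
  A \in unitmx /\
  (forall t, exists s, proj_eq (Pt s) (Pt t *m A)) /\
  (forall s, exists t, proj_eq (Pt s) (Pt t *m A)).

Definition Mabcd (a b c d : F) : 'M[F]_4 :=
  \matrix_(i < 4, j < 4) nth 0 (nth [::] [::
    [:: a ^+ 3; a ^+ 2 * c; a * c ^+ 2; c ^+ 3];
    [:: 3%:R * a ^+ 2 * b; a ^+ 2 * d + 2%:R * a * b * c;
        b * c ^+ 2 + 2%:R * a * c * d; 3%:R * c ^+ 2 * d];
    [:: 3%:R * a * b ^+ 2; b ^+ 2 * c + 2%:R * a * b * d;
        a * d ^+ 2 + 2%:R * b * c * d; 3%:R * c * d ^+ 2];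
    [:: b ^+ 3; b ^+ 2 * d; b * d ^+ 2; d ^+ 3]] i) j.

Definition in_Gstar (A : 'M[F]_4) : Prop :=
  exists a b c d : F, a * d - b * c != 0 /\ A = Mabcd a b c d.

Definition pt_orbit (S : 'M[F]_4 -> Prop) (x y : 'rV[F]_4) : Prop :=
  exists A, S A /\ proj_eq (x *m A) y.

Definition pl_orbit (S : 'M[F]_4 -> Prop) (c c' : 'rV[F]_4) : Prop :=
  exists A, S A /\ forall x : 'rV[F]_4, x != 0 -> (incid x c = incid (x *m A) c').


Definition nC (c : 'rV[F]_4) : nat := #|[set t : option F | incid (Pt t) c]|.
Definition is_Gamma (c : 'rV[F]_4) : bool := [exists t, proj_eq (Osc t) c].

Definition plane_of_kind (k : plane_kind) (c : 'rV[F]_4) : bool :=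
  (c != 0) &&
  match k with
  | GammaPl => is_Gamma c
  | TwoC => nC c == 2%N
  | ThreeC => nC c == 3%N
  | OneBarC => ~~ is_Gamma c && (nC c == 1%N)
  | ZeroC => nC c == 0%N
  end.

Definition nG (x : 'rV[F]_4) : nat := #|[set t : option F | incid x (Osc t)]|.

Definition point_of_kind (k : point_kind) (x : 'rV[F]_4) : bool :=
  (x != 0) &&
  match k with
  | CPt => on_C x
  | TPt => ~~ on_C x && on_tangent x
  | ThreeG => [&& ~~ on_C x, ~~ on_tangent x & nG x == 3%N]
  | OneG => [&& ~~ on_C x, ~~ on_tangent x & nG x == 1%N]
  | ZeroG => [&& ~~ on_C x, ~~ on_tangent x & nG x == 0%N]
  end.

(* number of nonzero vectors of a kind; number of projective objects = this / (q-1) *)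
Definition card_plane_kind (k : plane_kind) : nat :=
  #|[set c : 'rV[F]_4 | plane_of_kind k c]|.
Definition card_point_kind (k : point_kind) : nat :=
  #|[set x : 'rV[F]_4 | point_of_kind k x]|.
End TwistedCubic.

From HB Require Import structures.
From mathcomp Require Import all_boot all_order all_algebra finfield.
From mathcomp Require Import ring.
Set Implicit Arguments. Unset Strict Implicit. Unset Printing Implicit Defensive.
Import GRing.Theory.
Local Open Scope ring_scope.

(* Over any field, M(a,b,c,d) is the action of GL_2 on binary cubics,
   (u^3, u^2 v, u v^2, v^3) M(a,b,c,d) = ((au+bv)^3, ..., (cu+dv)^3), so G_q^* lies in G_q.
   For q = 4 the rest is a finite verification in an explicit model of F_4, to which F is
   isomorphic.  A matrix is determined by the images of the four points P(oo), P(0), P(1),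
   P(w) of C; for A in G_4 these are nonzero multiples of points of C, and after rescaling
   A the first one is a point of C.  Running over the 5 * 15^3 possibilities shows that
   every A in G_4 preserves the data (on C, on a tangent, number of Gamma-planes through
   it) of a point and (Gamma-plane, number of points of C) of a plane.  These data
   determine the five classes, and G_4^* is transitive on each class, so the classes are
   exactly the orbits of G_4 and of G_4^*. *)

Ltac ord4_case j := case: j => [[|[|[|[|//]]]] ?].

(** * The groups G_q and G_q^* *)

Section TwistedCubicGroups.
Variable F : finFieldType.
Implicit Types (a b c d e k u v : F) (x y r : 'rV[F]_4) (A B M : 'M[F]_4).

Lemma proj_eqP x y : reflect (exists2 k, k != 0 & y = k *: x) (proj_eq x y).
Proof.
apply: (iffP existsP) => [[k /andP[k0 /eqP ->]]|[k k0 ->]]; first by exists k.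
by exists k; rewrite k0 eqxx.
Qed.

Lemma dotE x y : dot x y = (x *m y^T) 0 0.
Proof. by rewrite /dot mxE; apply: eq_bigr => i _; rewrite mxE. Qed.

Lemma dot_mulmx_tr x y A : dot x (y *m A^T) = dot (x *m A) y.
Proof. by rewrite !dotE trmx_mul trmxK mulmxA. Qed.

Lemma dotZl k x y : dot (k *: x) y = k * dot x y.
Proof. by rewrite !dotE -scalemxAl mxE. Qed.

Lemma dotZr k x y : dot x (k *: y) = k * dot x y.
Proof. by rewrite !dotE linearZ /= -scalemxAr mxE. Qed.

Lemma incidZl k x y : k != 0 -> incid (k *: x) y = incid x y.
Proof. by move=> k0; rewrite /incid dotZl mulf_eq0 (negbTE k0). Qed.

Lemma incidZr k x y : k != 0 -> incid x (k *: y) = incid x y.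
Proof. by move=> k0; rewrite /incid dotZr mulf_eq0 (negbTE k0). Qed.

Lemma proj_eqZr k x y : k != 0 -> proj_eq x (k *: y) = proj_eq x y.
Proof.
move=> k0; apply/proj_eqP/proj_eqP => [[m m0 E] | [m m0 ->]].
  exists (k^-1 * m); first by rewrite mulf_neq0 ?invr_eq0.
  by rewrite -scalerA -E scalerA mulVf // scale1r.
by exists (k * m); rewrite ?mulf_neq0 // scalerA.
Qed.

Lemma same_plane_proj_eq (c c' : 'rV[F]_4) : c != 0 -> c' != 0 ->
  (forall x, x != 0 -> incid x c = incid x c') -> proj_eq c c'.
Proof.
move=> nz_c nz_c' same.
have [i ci] : exists i, c 0 i != 0.
  apply/existsP; apply: contraR nz_c => /existsPn c0.
  by apply/eqP/rowP => j; rewrite mxE; apply/eqP/negPn/c0.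
pose e j : 'rV[F]_4 := c 0 j *: 'e_i - c 0 i *: 'e_j.
have dot_e j y : dot (e j) y = c 0 j * y 0 i - c 0 i * y 0 j.
  by rewrite dotE mulmxBl -!scalemxAl -!rowE !mxE.
have cross j : c 0 i * c' 0 j = c 0 j * c' 0 i.
  apply/eqP; rewrite eq_sym -subr_eq0 -dot_e.
  have [-> | nz_e] := eqVneq (e j) 0; first by rewrite dotE mul0mx mxE.
  by rewrite -[_ == 0]/(incid _ _) -same // /incid dot_e mulrC subrr.
have c'i : c' 0 i != 0.
  apply: contraNneq nz_c' => c'i0; apply/eqP/rowP => j; rewrite mxE.
  by apply: (mulfI ci); rewrite cross c'i0 !mulr0.
apply/proj_eqP; exists (c' 0 i / c 0 i); first by rewrite mulf_neq0 ?invr_eq0.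
apply/rowP => j; rewrite mxE; apply: (mulfI ci).
by rewrite cross mulrA mulrCA divff // mulr1 mulrC.
Qed.

Lemma incid_mulmx_of_proj_eq A (c c' : 'rV[F]_4) :
  proj_eq (c' *m A^T) c -> forall x, incid x c = incid (x *m A) c'.
Proof. by move=> /proj_eqP[k k0 ->] x; rewrite incidZr // /incid dot_mulmx_tr. Qed.

Lemma incid_mulmx_proj_eq A (c c' : 'rV[F]_4) : A \in unitmx -> c != 0 -> c' != 0 ->
  (forall x, x != 0 -> incid x c = incid (x *m A) c') <-> proj_eq (c' *m A^T) c.
Proof.
move=> uA nz_c nz_c'; split=> [same | /incid_mulmx_of_proj_eq E x _]; last exact: E.
apply: same_plane_proj_eq => // [|x x0]; last by rewrite same // /incid dot_mulmx_tr.
by rewrite mulmx_free_eq0 ?row_free_unit ?unitmx_tr.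
Qed.

Definition bin_cube u v : 'rV[F]_4 := vec4 (u ^+ 3) (u ^+ 2 * v) (u * v ^+ 2) (v ^+ 3).

Lemma bin_cubeZ k u v : bin_cube (k * u) (k * v) = k ^+ 3 *: bin_cube u v.
Proof. by apply/rowP => j; rewrite !mxE; ord4_case j; rewrite /=; ring. Qed.

Lemma bin_cube_Mabcd a b c d u v :
  bin_cube u v *m Mabcd a b c d = bin_cube (a * u + b * v) (c * u + d * v).
Proof.
apply/rowP => j; rewrite !mxE !big_ord_recl big_ord0 !mxE.
by ord4_case j; rewrite /=; ring.
Qed.

Lemma Pt_SomeE t : Pt (Some t) = bin_cube t 1.
Proof. by apply/rowP => j; rewrite !mxE; ord4_case j; rewrite /=; ring. Qed.

Lemma Pt_NoneE : Pt None = bin_cube 1 0.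
Proof. by apply/rowP => j; rewrite !mxE; ord4_case j; rewrite /=; ring. Qed.

Lemma Pt_bin_cube t : exists2 uv : F * F, uv != (0, 0) & Pt t = bin_cube uv.1 uv.2.
Proof.
case: t => [t|]; [exists (t, 1); rewrite ?Pt_SomeE | exists (1, 0); rewrite ?Pt_NoneE] => //.
all: by rewrite xpair_eqE oner_eq0 ?andbF.
Qed.

Lemma bin_cube_on_C u v : (u, v) != (0, 0) -> exists t, proj_eq (Pt t) (bin_cube u v).
Proof.
rewrite xpair_eqE negb_and => nz_uv; have [v0 | nz_v] := eqVneq v 0.
  rewrite v0 eqxx orbF in nz_uv; exists None; apply/proj_eqP; exists (u ^+ 3).
    exact: expf_neq0.
  by rewrite v0 Pt_NoneE -bin_cubeZ mulr1 mulr0.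
exists (Some (u / v)); apply/proj_eqP; exists (v ^+ 3); first exact: expf_neq0.
by rewrite Pt_SomeE -bin_cubeZ mulr1 mulrC divfK.
Qed.

Lemma Mabcd_mul a b c d (a' b' c' d' : F) :
  Mabcd a b c d *m Mabcd a' b' c' d' =
  Mabcd (a * a' + c * b') (b * a' + d * b') (a * c' + c * d') (b * c' + d * d').
Proof.
apply/matrixP => i j; rewrite !mxE !big_ord_recl big_ord0 !mxE.
by ord4_case i; ord4_case j; rewrite /=; ring.
Qed.

Lemma Mabcd_scalar e : Mabcd e 0 0 e = (e ^+ 3)%:M.
Proof.
apply/matrixP => i j; rewrite !mxE.
by ord4_case i; ord4_case j; rewrite /= ?mulr1n ?mulr0n; ring.
Qed.

Lemma in_Gstar_mul A B : in_Gstar A -> in_Gstar B -> in_Gstar (A *m B).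
Proof.
move=> [a [b [c [d [det_n0 ->]]]]] [a' [b' [c' [d' [det'_n0 ->]]]]].
rewrite Mabcd_mul; do 4 eexists; split; last by [].
rewrite [X in X != 0](_ : _ = (a * d - b * c) * (a' * d' - b' * c')); last by ring.
exact: mulf_neq0.
Qed.

Lemma unitmx_scalar_inv A B e : e != 0 -> A *m B = e%:M -> A \in unitmx.
Proof.
move=> e0 AB; suff /mulmx1_unit[] : A *m (e^-1 *: B) = 1%:M by [].
by rewrite -scalemxAr AB scale_scalar_mx mulVf.
Qed.

Lemma in_Gstar_inv A : in_Gstar A ->
  exists B e, [/\ in_Gstar B, e != 0, A *m B = e%:M & B *m A = e%:M].
Proof.
move=> [a [b [c [d [det_n0 ->]]]]].
exists (Mabcd d (- b) (- c) a), ((a * d - b * c) ^+ 3); split.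
- exists d, (- b), (- c), a; split => //.
  by rewrite [X in X != 0](_ : _ = a * d - b * c) //; ring.
- exact: expf_neq0.
- by rewrite Mabcd_mul -Mabcd_scalar; congr Mabcd; ring.
- by rewrite Mabcd_mul -Mabcd_scalar; congr Mabcd; ring.
Qed.

Lemma lin_pair_neq0 a b c d u v : a * d - b * c != 0 -> (u, v) != (0, 0) ->
  (a * u + b * v, c * u + d * v) != (0, 0).
Proof.
move=> det_n0; rewrite !xpair_eqE; apply: contra => /andP[/eqP e1 /eqP e2].
have Eu : (a * d - b * c) * u = d * (a * u + b * v) - b * (c * u + d * v) by ring.
have Ev : (a * d - b * c) * v = a * (c * u + d * v) - c * (a * u + b * v) by ring.
rewrite e1 e2 !mulr0 subrr in Eu Ev.
by move/eqP: Eu; move/eqP: Ev; rewrite !mulf_eq0 (negbTE det_n0) /= => -> ->.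
Qed.

Lemma in_GqZ k A : k != 0 -> in_Gq A -> in_Gq (k *: A).
Proof.
move=> k0 [uA [into onto]]; split; first by rewrite unitmxZ ?unitfE.
split=> [t | s].
  have [s /proj_eqP[m m0 E]] := into t; exists s; apply/proj_eqP; exists (k * m).
    exact: mulf_neq0.
  by rewrite -scalemxAr E scalerA.
have [t /proj_eqP[m m0 E]] := onto s; exists t; apply/proj_eqP; exists (k * m).
  exact: mulf_neq0.
by rewrite -scalemxAr E scalerA.
Qed.

Lemma Gstar_sub_Gq A : in_Gstar A -> in_Gq A.
Proof.
move=> Gs_A; have [B [e [_ e0 AB _]]] := in_Gstar_inv Gs_A.
case: Gs_A => [a [b [c [d [det_n0 ->]]]]] in AB *.
split; first exact: unitmx_scalar_inv AB.
split=> [t | s].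
  have [[u v] /= nz_uv ->] := Pt_bin_cube t.
  have [s Cs] := bin_cube_on_C (lin_pair_neq0 det_n0 nz_uv).
  by exists s; rewrite bin_cube_Mabcd.
have [[u' v'] /= nz_uv' ->] := Pt_bin_cube s.
have nz_uv : (d * u' + - b * v', - c * u' + a * v') != (0, 0).
  by apply: lin_pair_neq0; rewrite // [X in X != 0](_ : _ = a * d - b * c) //; ring.
have [t /proj_eqP[m m0 Et]] := bin_cube_on_C nz_uv.
exists t; have -> : Pt t = m^-1 *: bin_cube (d * u' + - b * v') (- c * u' + a * v').
  by rewrite Et scalerA mulVf // scale1r.
apply/proj_eqP; exists (m^-1 * (a * d - b * c) ^+ 3).
  by rewrite mulf_neq0 ?invr_eq0 ?expf_neq0.
by rewrite -scalemxAl bin_cube_Mabcd -scalerA -bin_cubeZ; congr (_ *: bin_cube _ _); ring.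
Qed.

Lemma pt_orbit_Gstar_trans r x y M1 M2 : in_Gstar M1 -> in_Gstar M2 ->
  proj_eq (r *m M1) x -> proj_eq (r *m M2) y -> pt_orbit (@in_Gstar F) x y.
Proof.
move=> Gs1 Gs2 /proj_eqP[k1 k1_0 ->] /proj_eqP[k2 k2_0 ->].
have [N1 [e [GsN1 e0 M1N1 _]]] := in_Gstar_inv Gs1.
exists (N1 *m M2); split; first exact: in_Gstar_mul.
apply/proj_eqP; exists (k2 / (k1 * e)); first by rewrite mulf_neq0 ?invr_eq0 ?mulf_neq0.
rewrite -scalemxAl !mulmxA -(mulmxA r) M1N1 mul_mx_scalar -scalemxAl !scalerA.
by congr (_ *: _); field; rewrite k1_0 e0.
Qed.

Lemma pl_orbit_Gstar_trans r (c c' : 'rV[F]_4) M1 M2 : in_Gstar M1 -> in_Gstar M2 ->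
  proj_eq (r *m M1^T) c -> proj_eq (r *m M2^T) c' -> pl_orbit (@in_Gstar F) c c'.
Proof.
move=> Gs1 Gs2 /proj_eqP[k1 k1_0 ->] /proj_eqP[k2 k2_0 ->].
have [N2 [e [GsN2 e0 _ N2M2]]] := in_Gstar_inv Gs2.
exists (M1 *m N2); split; first exact: in_Gstar_mul.
move=> x _; move: x; apply: incid_mulmx_of_proj_eq; apply/proj_eqP; exists (k1 / (k2 * e)).
  by rewrite mulf_neq0 ?invr_eq0 ?mulf_neq0.
rewrite trmx_mul -scalemxAl !mulmxA -(mulmxA r) -trmx_mul N2M2 tr_scalar_mx mul_mx_scalar.
by rewrite -scalemxAl !scalerA; congr (_ *: _); field; rewrite k2_0 e0.
Qed.

Definition point_signature (x : 'rV[F]_4) := (on_C x, on_tangent x, nG x).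
Definition plane_signature (c : 'rV[F]_4) := (is_Gamma c, nC c).

Lemma point_signatureZ k x : k != 0 -> point_signature (k *: x) = point_signature x.
Proof.
move=> k0; have tangentZ z k' : on_tangent z -> on_tangent (k' *: z).
  case/existsP=> t /existsP[a /existsP[b /eqP->]]; apply/existsP; exists t.
  apply/existsP; exists (k' * a); apply/existsP; exists (k' * b).
  by rewrite scalerDr !scalerA.
congr (_, _, _).
- by apply: eq_existsb => t; rewrite proj_eqZr.
- apply/idP/idP => [/(tangentZ _ k^-1) | /(tangentZ _ k)] //.
  by rewrite scalerA mulVf // scale1r.
- by apply: eq_card => t; rewrite !inE incidZl.
Qed.

Lemma plane_signatureZ k (c : 'rV[F]_4) : k != 0 -> plane_signature (k *: c) = plane_signature c.
Proof.
move=> k0; congr (_, _); first by apply: eq_existsb => t; rewrite proj_eqZr.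
by apply: eq_card => t; rewrite !inE incidZr.
Qed.

Lemma point_of_kind_signature (k : point_kind) x y : (x != 0) = (y != 0) ->
  point_signature x = point_signature y -> point_of_kind k x = point_of_kind k y.
Proof. by rewrite /point_of_kind => -> [-> -> ->]. Qed.

Lemma plane_of_kind_signature (k : plane_kind) (c c' : 'rV[F]_4) : (c != 0) = (c' != 0) ->
  plane_signature c = plane_signature c' -> plane_of_kind k c = plane_of_kind k c'.
Proof. by rewrite /plane_of_kind => -> [-> ->]. Qed.

End TwistedCubicGroups.

Lemma card_set_count (T : finType) (s : seq T) (P : pred T) :
  uniq s -> (forall x, x \in s) -> #|[set x | P x]| = count P s.
Proof.
move=> s_uniq s_full; rewrite -size_filter -(card_uniqP (filter_uniq P s_uniq)).
by apply: eq_card => x; rewrite inE mem_filter s_full andbT.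
Qed.

Lemma has_exists (T : Type) (p : pred T) s : has p s -> exists x, p x.
Proof. by elim: s => //= x s IH /orP[px | /IH]; first by exists x. Qed.

(** * An explicit model of F_4 *)

(* F_4 = F_2(w) with w^2 = w + 1; [gw2] is w^2 = w + 1. *)
Inductive gf4 := g0 | g1 | gw | gw2.

Definition gf4_eqb (a b : gf4) : bool :=
  match a, b with g0, g0 | g1, g1 | gw, gw | gw2, gw2 => true | _, _ => false end.

Lemma gf4_eqP : Equality.axiom gf4_eqb.
Proof. by case; case; constructor. Qed.

HB.instance Definition _ := hasDecEq.Build gf4 gf4_eqP.

Definition add4 (a b : gf4) : gf4 :=
  match a, b with
  | g0, x | x, g0 => x
  | g1, g1 | gw, gw | gw2, gw2 => g0
  | g1, gw | gw, g1 => gw2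
  | g1, gw2 | gw2, g1 => gw
  | gw, gw2 | gw2, gw => g1
  end.

Definition mul4 (a b : gf4) : gf4 :=
  match a, b with
  | g0, _ | _, g0 => g0
  | g1, x | x, g1 => x
  | gw, gw => gw2
  | gw2, gw2 => gw
  | gw, gw2 | gw2, gw => g1
  end.

Definition gf4s := [:: g0; g1; gw; gw2].
Definition units4 := [:: g1; gw; gw2].
Definition line4 : seq (option gf4) := None :: map Some gf4s.

Inductive v4 := V4 of gf4 & gf4 & gf4 & gf4.

Definition v4_eqb (u v : v4) : bool :=
  let: V4 a b c d := u in let: V4 a' b' c' d' := v in
  [&& a == a', b == b', c == c' & d == d'].

Lemma v4_eqP : Equality.axiom v4_eqb.
Proof.
case=> a b c d [] a' b' c' d' /=.
by apply: (iffP and4P) => [[/eqP-> /eqP-> /eqP-> /eqP->] | [-> -> -> ->]].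
Qed.

HB.instance Definition _ := hasDecEq.Build v4 v4_eqP.

Definition m4 := (v4 * v4 * v4 * v4)%type.

Definition tuples4 (T : Type) (s0 s : seq T) : seq (T * T * T * T) :=
  [seq (x, a) | x <- [seq (x, a) | x <- [seq (x, a) | x <- s0, a <- s], a <- s], a <- s].

Lemma mem_tuples4 (T : eqType) (s0 s : seq T) a b c d :
  a \in s0 -> b \in s -> c \in s -> d \in s -> (a, b, c, d) \in tuples4 s0 s.
Proof. by move=> sa sb sc sd; do 4 apply: (allpairs_f pair) => //. Qed.

Definition vecs4 : seq v4 := [seq V4 a b c d | '(a, b, c, d) <- tuples4 gf4s gf4s].

Lemma mem_gf4s a : a \in gf4s.
Proof. by case: a. Qed.

Lemma mem_vecs4 v : v \in vecs4.
Proof.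
by case: v => a b c d; apply/mapP; exists (a, b, c, d); rewrite ?mem_tuples4 ?mem_gf4s.
Qed.

Lemma mem_line4 t : t \in line4.
Proof. by case: t => [[]|]. Qed.

Definition zero4 : v4 := V4 g0 g0 g0 g0.

Definition scale4 (k : gf4) (v : v4) : v4 :=
  let: V4 a b c d := v in V4 (mul4 k a) (mul4 k b) (mul4 k c) (mul4 k d).
Definition addv4 (u v : v4) : v4 :=
  let: V4 a b c d := u in let: V4 a' b' c' d' := v in
  V4 (add4 a a') (add4 b b') (add4 c c') (add4 d d').
Definition dot4 (u v : v4) : gf4 :=
  let: V4 a b c d := u in let: V4 a' b' c' d' := v in
  add4 (mul4 a a') (add4 (mul4 b b') (add4 (mul4 c c') (mul4 d d'))).
Definition mulvm4 (x : v4) (A : m4) : v4 :=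
  let: V4 x0 x1 x2 x3 := x in let: (r0, r1, r2, r3) := A in
  addv4 (scale4 x0 r0) (addv4 (scale4 x1 r1) (addv4 (scale4 x2 r2) (scale4 x3 r3))).
Definition mulmm4 (A B : m4) : m4 :=
  let: (r0, r1, r2, r3) := A in (mulvm4 r0 B, mulvm4 r1 B, mulvm4 r2 B, mulvm4 r3 B).
Definition tr4 (A : m4) : m4 :=
  let: (V4 a0 b0 c0 d0, V4 a1 b1 c1 d1, V4 a2 b2 c2 d2, V4 a3 b3 c3 d3) := A in
  (V4 a0 a1 a2 a3, V4 b0 b1 b2 b3, V4 c0 c1 c2 c3, V4 d0 d1 d2 d3).

Definition cube4 (t : gf4) := mul4 t (mul4 t t).

(* [Pt], [Tdir] and [Osc] in characteristic 2, where 3 = 1, 2 = 0 and -1 = 1. *)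
Definition Pt4 (t : option gf4) : v4 :=
  if t is Some t then V4 (cube4 t) (mul4 t t) t g1 else V4 g1 g0 g0 g0.
Definition Tdir4 (t : option gf4) : v4 :=
  if t is Some t then V4 (mul4 t t) g0 g1 g0 else V4 g0 g1 g0 g0.
Definition Osc4 (t : option gf4) : v4 :=
  if t is Some t then V4 g1 t (mul4 t t) (cube4 t) else V4 g0 g0 g0 g1.

Definition proj_eq4 (x y : v4) : bool := has (fun k => (k != g0) && (y == scale4 k x)) gf4s.
Definition incid4 (x c : v4) : bool := dot4 x c == g0.
Definition on_C4 (x : v4) : bool := has (fun t => proj_eq4 (Pt4 t) x) line4.
Definition on_tangent4 (x : v4) : bool :=
  has (fun t => has (fun a => has (fun b =>
    x == addv4 (scale4 a (Pt4 t)) (scale4 b (Tdir4 t))) gf4s) gf4s) line4.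
Definition nC4 (c : v4) : nat := count (fun t => incid4 (Pt4 t) c) line4.
Definition is_Gamma4 (c : v4) : bool := has (fun t => proj_eq4 (Osc4 t) c) line4.
Definition nG4 (x : v4) : nat := count (fun t => incid4 x (Osc4 t)) line4.

Definition point_signature4 (x : v4) := (on_C4 x, on_tangent4 x, nG4 x).
Definition plane_signature4 (c : v4) := (is_Gamma4 c, nC4 c).

Definition plane_of_kind4 (k : plane_kind) (c : v4) : bool :=
  (c != zero4) &&
  match k with
  | GammaPl => is_Gamma4 c
  | TwoC => nC4 c == 2%N
  | ThreeC => nC4 c == 3%N
  | OneBarC => ~~ is_Gamma4 c && (nC4 c == 1%N)
  | ZeroC => nC4 c == 0%N
  end.

Definition point_of_kind4 (k : point_kind) (x : v4) : bool :=
  (x != zero4) &&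
  match k with
  | CPt => on_C4 x
  | TPt => ~~ on_C4 x && on_tangent4 x
  | ThreeG => [&& ~~ on_C4 x, ~~ on_tangent4 x & nG4 x == 3%N]
  | OneG => [&& ~~ on_C4 x, ~~ on_tangent4 x & nG4 x == 1%N]
  | ZeroG => [&& ~~ on_C4 x, ~~ on_tangent4 x & nG4 x == 0%N]
  end.

Definition point_kinds := [:: CPt; TPt; ThreeG; OneG; ZeroG].
Definition plane_kinds := [:: GammaPl; TwoC; ThreeC; OneBarC; ZeroC].

Definition C_images4 (B : m4) : seq v4 := [seq mulvm4 (Pt4 t) B | t <- line4].
Definition maps_C_into4 (B : m4) : bool := all on_C4 (C_images4 B).
Definition maps_C_onto4 (B : m4) : bool :=
  all (fun s => has (proj_eq4 (Pt4 s)) (C_images4 B)) line4.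

Definition frame4 : m4 := (Pt4 None, Pt4 (Some g0), Pt4 (Some g1), Pt4 (Some gw)).
(* The inverse of [frame4]. *)
Definition frame_inv4 : m4 :=
  (V4 g1 g0 g0 g0, V4 gw2 gw2 gw g1, V4 gw gw gw2 g1, V4 g0 g1 g0 g0).

Definition C_points4 : seq v4 := map Pt4 line4.
Definition on_C_multiples4 : seq v4 := [seq scale4 k (Pt4 s) | k <- units4, s <- line4].

(* Up to a scalar factor, each matrix of G_4 is among these candidates. *)
Definition Gq_candidates4 : seq m4 :=
  map (mulmm4 frame_inv4) (tuples4 C_points4 on_C_multiples4).

Definition Gq4 : seq m4 := filter maps_C_onto4 (filter maps_C_into4 Gq_candidates4).

Lemma Gq4_preserves_signatures :
  all (fun v => let sP := point_signature4 v in let sL := plane_signature4 v in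
    all (fun B => (point_signature4 (mulvm4 v B) == sP) &&
                  (plane_signature4 (mulvm4 v (tr4 B)) == sL)) Gq4) vecs4.
Proof. by vm_compute. Qed.

(* M(a,b,c,d) in characteristic 2. *)
Definition Mstar4 (q : v4) : m4 :=
  let: V4 a b c d := q in
  (V4 (cube4 a) (mul4 (mul4 a a) c) (mul4 a (mul4 c c)) (cube4 c),
   V4 (mul4 (mul4 a a) b) (mul4 (mul4 a a) d) (mul4 b (mul4 c c)) (mul4 (mul4 c c) d),
   V4 (mul4 a (mul4 b b)) (mul4 (mul4 b b) c) (mul4 a (mul4 d d)) (mul4 c (mul4 d d)),
   V4 (cube4 b) (mul4 (mul4 b b) d) (mul4 b (mul4 d d)) (cube4 d)).
Definition det4 (q : v4) : gf4 := let: V4 a b c d := q in add4 (mul4 a d) (mul4 b c).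
Definition Gstar4 : seq v4 := [seq q <- vecs4 | det4 q != g0].

Definition pt_orbit4 (x y : v4) : bool :=
  has (fun q => proj_eq4 (mulvm4 x (Mstar4 q)) y) Gstar4.
Definition pl_orbit4 (c c' : v4) : bool :=
  has (fun q => proj_eq4 (mulvm4 c (tr4 (Mstar4 q))) c') Gstar4.

Definition point_rep4 (k : point_kind) : v4 :=
  head zero4 [seq v <- vecs4 | point_of_kind4 k v].
Definition plane_rep4 (k : plane_kind) : v4 :=
  head zero4 [seq v <- vecs4 | plane_of_kind4 k v].

Lemma Gstar_point_orbits4 k :
  all (pt_orbit4 (point_rep4 k)) [seq v <- vecs4 | point_of_kind4 k v].
Proof. by case: k; vm_compute. Qed.

Lemma Gstar_plane_orbits4 k :
  all (pl_orbit4 (plane_rep4 k)) [seq v <- vecs4 | plane_of_kind4 k v].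
Proof. by case: k; vm_compute. Qed.

Lemma point_kinds_exhaustive4 :
  all (fun v => (v == zero4) || has (point_of_kind4^~ v) point_kinds) vecs4.
Proof. by vm_compute. Qed.

Lemma plane_kinds_exhaustive4 :
  all (fun v => (v == zero4) || has (plane_of_kind4^~ v) plane_kinds) vecs4.
Proof. by vm_compute. Qed.

Lemma frame4K B : mulmm4 frame_inv4 (mulmm4 frame4 B) = B.
Proof.
case: B => [[[[a0 b0 c0 d0] [a1 b1 c1 d1]] [a2 b2 c2 d2]] [a3 b3 c3 d3]] /=.
congr (_, _, _, _); congr V4.
all: by repeat match goal with |- context [?x] => is_var x; case: x end.
Qed.

Lemma on_C_multiples4P v : on_C4 v -> v \in on_C_multiples4.
Proof.
case/hasP => s _ /hasP[k _ /andP[k0 /eqP->]].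
rewrite /on_C_multiples4 (allpairs_f (fun k s => scale4 k (Pt4 s))) ?mem_line4 //.
by case: k k0.
Qed.

Lemma frame_images_on_C4 B : mulvm4 (Pt4 None) B \in C_points4 ->
  maps_C_into4 B -> mulmm4 frame4 B \in tuples4 C_points4 on_C_multiples4.
Proof.
move=> C_oo /allP C_img; apply: mem_tuples4 => //; apply: on_C_multiples4P; apply: C_img.
all: exact: (map_f (fun t => mulvm4 (Pt4 t) B) (mem_line4 _)).
Qed.

Lemma Gq4_signatures B v : mulvm4 (Pt4 None) B \in C_points4 ->
  maps_C_into4 B -> maps_C_onto4 B ->
  point_signature4 (mulvm4 v B) = point_signature4 v /\
  plane_signature4 (mulvm4 v (tr4 B)) = plane_signature4 v.
Proof.
move=> C_oo into onto; have B_Gq : B \in Gq4.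
  by rewrite !mem_filter onto into -[B]frame4K map_f ?frame_images_on_C4.
have /allP/(_ v (mem_vecs4 v))/allP/(_ B B_Gq) := Gq4_preserves_signatures.
by case/andP=> /eqP-> /eqP->.
Qed.

Lemma point_rep4_orbit k x : point_of_kind4 k x -> pt_orbit4 (point_rep4 k) x.
Proof.
by move=> kx; apply: (allP (Gstar_point_orbits4 k)); rewrite mem_filter kx mem_vecs4.
Qed.

Lemma plane_rep4_orbit k c : plane_of_kind4 k c -> pl_orbit4 (plane_rep4 k) c.
Proof.
by move=> kc; apply: (allP (Gstar_plane_orbits4 k)); rewrite mem_filter kc mem_vecs4.
Qed.

(** * Transport to a field of order 4 *)

Section FieldOfOrderFour.
Variable F : finFieldType.
Hypothesis card_F : #|F| = 4%N.

Lemma char2 : (2%:R : F) = 0.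
Proof. by apply: pcharf0; apply: (@card_finPcharP _ 2 2). Qed.

Lemma addrr (x : F) : x + x = 0.
Proof. by rewrite -mulr2n -mulr_natr char2 mulr0. Qed.

Lemma oppr_char2 (x : F) : - x = x.
Proof. by apply/eqP; rewrite eq_sym -subr_eq0 opprK addrr. Qed.

Lemma natr3 : (3%:R : F) = 1.
Proof. by rewrite -[3%N]/(2 + 1)%N natrD char2 add0r. Qed.

Lemma exists_nonbinary : exists w : F, (w != 0) && (w != 1).
Proof.
apply/existsP; apply: contraT => /existsPn binary.
pose s : seq F := [:: 0; 1].
have : (#|F| <= size s)%N.
  apply: (leq_trans _ (card_size s)); apply: subset_leq_card; apply/subsetP => x _.
  by move: (binary x); rewrite !inE negb_and !negbK => /orP[] ->; rewrite ?orbT.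
by rewrite card_F.
Qed.

Let w : F := xchoose exists_nonbinary.

Lemma w_neq0 : w != 0. Proof. by case/andP: (xchooseP exists_nonbinary). Qed.
Lemma w_neq1 : w != 1. Proof. by case/andP: (xchooseP exists_nonbinary). Qed.

Lemma w_sqr : w * w = w + 1.
Proof.
have w3 : w ^+ 3 = 1.
  by apply: (mulfI w_neq0); rewrite -exprS -[in LHS]card_F expf_card mulr1.
have : (w - 1) * (w * w + w + 1) = w ^+ 3 - 1 by ring.
rewrite w3 subrr => /eqP; rewrite mulf_eq0 subr_eq0 (negbTE w_neq1) -addrA addr_eq0 oppr_char2.
by move/eqP.
Qed.

Definition of4 (a : gf4) : F :=
  match a with g0 => 0 | g1 => 1 | gw => w | gw2 => w + 1 end.

Lemma of4D a b : of4 (add4 a b) = of4 a + of4 b.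
Proof.
case: a; case: b; rewrite /= ?add0r ?addr0 ?addrr //.
- by rewrite addrC.
- by rewrite addrCA addrr addr0.
- by rewrite addrA addrr add0r.
- by rewrite -addrA addrr addr0.
- by rewrite addrAC addrr add0r.
Qed.

Lemma of4M a b : of4 (mul4 a b) = of4 a * of4 b.
Proof.
case: a; case: b; rewrite /= ?mul0r ?mulr0 ?mul1r ?mulr1 //.
- by rewrite w_sqr.
- by rewrite mulrDr mulr1 w_sqr addrAC addrr add0r.
- by rewrite mulrDl mul1r w_sqr addrAC addrr add0r.
- rewrite [RHS](_ : _ = w * w + 2%:R * w + 1); last by ring.
  by rewrite w_sqr char2 mul0r addr0 -addrA addrr addr0.
Qed.

Lemma of4_eq0 a : (of4 a == 0) = (a == g0).
Proof.
case: a; rewrite /= ?eqxx ?oner_eq0 ?(negbTE w_neq0) //.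
by rewrite addr_eq0 oppr_char2 (negbTE w_neq1).
Qed.

Definition to4 (x : F) : gf4 :=
  if x == 0 then g0 else if x == 1 then g1 else if x == w then gw else gw2.

Lemma of4K : cancel of4 to4.
Proof.
have w1_neq_w : w + 1 != w by rewrite -subr_eq0 addrAC subrr add0r oner_eq0.
have w1_neq1 : w + 1 != 1 by rewrite -subr_eq0 addrK w_neq0.
move=> a; rewrite /to4 of4_eq0; case: a => //=.
- by rewrite eqxx.
- by rewrite (negbTE w_neq1) eqxx.
- by rewrite (negbTE w1_neq1) (negbTE w1_neq_w).
Qed.

Lemma of4_surj (x : F) : exists a, x = of4 a.
Proof.
suff /mapP[a _ ->] : x \in map of4 gf4s by exists a.
apply: contraT => x_new.
have uniq_s : uniq (x :: map of4 gf4s) by rewrite cons_uniq x_new (map_inj_uniq (can_inj of4K)).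
by have := max_card (mem (x :: map of4 gf4s)); rewrite (card_uniqP uniq_s) card_F.
Qed.

Lemma to4K : cancel to4 of4.
Proof. by move=> x; have [a ->] := of4_surj x; rewrite of4K. Qed.

Definition vec_of4 (v : v4) : 'rV[F]_4 :=
  let: V4 a b c d := v in vec4 (of4 a) (of4 b) (of4 c) (of4 d).

Definition vec_to4 (x : 'rV[F]_4) : v4 :=
  let e i := to4 (x 0 (inord i)) in V4 (e 0%N) (e 1%N) (e 2%N) (e 3%N).

Definition mx_of4 (B : m4) : 'M[F]_4 :=
  let: (r0, r1, r2, r3) := B in \matrix_(i < 4) vec_of4 (nth r0 [:: r0; r1; r2; r3] i).

Definition mx_to4 (A : 'M[F]_4) : m4 :=
  let r i := vec_to4 (row (inord i) A) in (r 0%N, r 1%N, r 2%N, r 3%N).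

Lemma vec_to4K : cancel vec_of4 vec_to4.
Proof. by case=> a b c d; rewrite /vec_to4 /= !mxE !inordK //= !of4K. Qed.

Lemma vec_of4K : cancel vec_to4 vec_of4.
Proof.
move=> x; apply/rowP => j; rewrite mxE; ord4_case j; rewrite /= to4K.
all: by congr (x _ _); apply: val_inj; rewrite /= inordK.
Qed.

Lemma mx_of4K : cancel mx_to4 mx_of4.
Proof.
move=> A; apply/matrixP => i j; rewrite mxE; ord4_case i; rewrite vec_of4K mxE.
all: by congr (A _ _); apply: val_inj; rewrite /= inordK.
Qed.

Lemma vec_of4_inj : injective vec_of4.
Proof. exact: can_inj vec_to4K. Qed.

Lemma vec_of4_eq0 v : (vec_of4 v == 0) = (v == zero4).
Proof.
rewrite -(inj_eq vec_of4_inj); congr (_ == _).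
by apply/rowP => j; rewrite !mxE; ord4_case j.
Qed.

Lemma vec_of4Z k v : vec_of4 (scale4 k v) = of4 k *: vec_of4 v.
Proof. by case: v => a b c d; apply/rowP => j; rewrite !mxE; ord4_case j; rewrite /= of4M. Qed.

Lemma vec_of4D u v : vec_of4 (addv4 u v) = vec_of4 u + vec_of4 v.
Proof.
by case: u v => a b c d [a' b' c' d']; apply/rowP => j; rewrite !mxE; ord4_case j; rewrite /= of4D.
Qed.

Lemma dot_of4 u v : dot (vec_of4 u) (vec_of4 v) = of4 (dot4 u v).
Proof.
case: u v => a b c d [a' b' c' d'].
by rewrite /dot !big_ord_recl big_ord0 !mxE /= !of4D !of4M addr0.
Qed.

Lemma vec_of4_mul x B : vec_of4 (mulvm4 x B) = vec_of4 x *m mx_of4 B.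
Proof.
case: x B => x0 x1 x2 x3 [[[r0 r1] r2] r3]; rewrite /= !vec_of4D !vec_of4Z.
by apply/rowP => j; rewrite !mxE !big_ord_recl big_ord0 !mxE /= addr0.
Qed.

Lemma mx_of4_tr B : mx_of4 (tr4 B) = (mx_of4 B)^T.
Proof.
case: B => [[[[a0 b0 c0 d0] [a1 b1 c1 d1]] [a2 b2 c2 d2]] [a3 b3 c3 d3]].
by apply/matrixP => i j; rewrite !mxE; ord4_case i; ord4_case j; rewrite /= !mxE.
Qed.

Lemma Pt_of4 t : Pt (omap of4 t) = vec_of4 (Pt4 t).
Proof.
by case: t => [t|] /=; apply/rowP => j; rewrite !mxE; ord4_case j; rewrite //= /cube4 ?of4M.
Qed.

Lemma Tdir_of4 t : Tdir (omap of4 t) = vec_of4 (Tdir4 t).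
Proof.
case: t => [t|] /=; apply/rowP => j; rewrite !mxE; ord4_case j; rewrite //= ?of4M.
- by rewrite natr3 mul1r.
- by rewrite char2 mul0r.
Qed.

Lemma Osc_of4 t : Osc (omap of4 t) = vec_of4 (Osc4 t).
Proof.
case: t => [t|] /=; apply/rowP => j; rewrite !mxE; ord4_case j; rewrite //= /cube4 ?of4M.
all: by rewrite ?oppr_char2 ?natr3 ?mul1r ?expr2.
Qed.

Lemma Mabcd_of4 a b c d :
  Mabcd (of4 a) (of4 b) (of4 c) (of4 d) = mx_of4 (Mstar4 (V4 a b c d)).
Proof.
apply/matrixP => i j; rewrite !mxE; ord4_case i; ord4_case j; rewrite /= !mxE /= /cube4 ?of4M.
all: by rewrite ?natr3 ?char2; ring.
Qed.

Lemma det_of4 a b c d :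
  of4 a * of4 d - of4 b * of4 c = of4 (det4 (V4 a b c d)).
Proof. by rewrite /= of4D !of4M oppr_char2. Qed.

Lemma existsF_of4 (P : pred F) : [exists k, P k] = has (P \o of4) gf4s.
Proof.
apply/existsP/hasP => [[k Pk] | [a _ Pa]]; last by exists (of4 a).
by exists (to4 k); [case: (to4 k) | rewrite /= to4K].
Qed.

Lemma omap_to4K : cancel (omap to4) (omap of4).
Proof. by case=> //= x; rewrite to4K. Qed.

Lemma existsT_of4 (P : pred (option F)) : [exists t, P t] = has (P \o omap of4) line4.
Proof.
apply/existsP/hasP => [[t Pt] | [t _ Pt]]; last by exists (omap of4 t).
by exists (omap to4 t); rewrite ?mem_line4 //= omap_to4K.
Qed.

Lemma cardT_of4 (P : pred (option F)) : #|[set t | P t]| = count (P \o omap of4) line4.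
Proof.
rewrite (@card_set_count _ (map (omap of4) line4)) ?count_map //.
  by rewrite map_inj_uniq //; apply: can_inj (omap to4) _; case=> //= a; rewrite of4K.
by move=> t; rewrite -[t]omap_to4K map_f ?mem_line4.
Qed.

Lemma cardV_of4 (P : pred 'rV[F]_4) : #|[set x | P x]| = count (P \o vec_of4) vecs4.
Proof.
rewrite (@card_set_count _ (map vec_of4 vecs4)) ?count_map //.
  by rewrite (map_inj_uniq vec_of4_inj).
by move=> x; rewrite -[x]vec_of4K map_f ?mem_vecs4.
Qed.

Lemma proj_eq_of4 u v : proj_eq (vec_of4 u) (vec_of4 v) = proj_eq4 u v.
Proof.
rewrite /proj_eq existsF_of4; apply: eq_has => k /=.
by rewrite of4_eq0 -vec_of4Z (inj_eq vec_of4_inj).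
Qed.

Lemma incid_of4 u v : incid (vec_of4 u) (vec_of4 v) = incid4 u v.
Proof. by rewrite /incid dot_of4 of4_eq0. Qed.

Lemma on_C_of4 v : on_C (vec_of4 v) = on_C4 v.
Proof. by rewrite /on_C existsT_of4; apply: eq_has => t; rewrite /= Pt_of4 proj_eq_of4. Qed.

Lemma on_tangent_of4 v : on_tangent (vec_of4 v) = on_tangent4 v.
Proof.
rewrite /on_tangent existsT_of4; apply: eq_has => t; rewrite [LHS]/= existsF_of4.
apply: eq_has => a; rewrite [LHS]/= existsF_of4; apply: eq_has => b.
by rewrite [LHS]/= Pt_of4 Tdir_of4 -!vec_of4Z -vec_of4D (inj_eq vec_of4_inj).
Qed.

Lemma nC_of4 v : nC (vec_of4 v) = nC4 v.
Proof. by rewrite /nC cardT_of4; apply: eq_count => t; rewrite /= Pt_of4 incid_of4. Qed.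

Lemma is_Gamma_of4 v : is_Gamma (vec_of4 v) = is_Gamma4 v.
Proof. by rewrite /is_Gamma existsT_of4; apply: eq_has => t; rewrite /= Osc_of4 proj_eq_of4. Qed.

Lemma nG_of4 v : nG (vec_of4 v) = nG4 v.
Proof. by rewrite /nG cardT_of4; apply: eq_count => t; rewrite /= Osc_of4 incid_of4. Qed.

Lemma point_of_kind_of4 k v : point_of_kind k (vec_of4 v) = point_of_kind4 k v.
Proof. by rewrite /point_of_kind vec_of4_eq0 on_C_of4 on_tangent_of4 nG_of4. Qed.

Lemma plane_of_kind_of4 k v : plane_of_kind k (vec_of4 v) = plane_of_kind4 k v.
Proof. by rewrite /plane_of_kind vec_of4_eq0 is_Gamma_of4 nC_of4. Qed.

Lemma point_signature_of4 v : point_signature (vec_of4 v) = point_signature4 v.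
Proof. by rewrite /point_signature on_C_of4 on_tangent_of4 nG_of4. Qed.

Lemma plane_signature_of4 v : plane_signature (vec_of4 v) = plane_signature4 v.
Proof. by rewrite /plane_signature is_Gamma_of4 nC_of4. Qed.

Lemma in_Gq_of4 B : in_Gq (mx_of4 B) -> maps_C_into4 B && maps_C_onto4 B.
Proof.
case=> _ [into onto]; apply/andP; split; apply/allP.
  move=> _ /mapP[t _ ->]; have [s] := into (omap of4 t).
  rewrite -[s]omap_to4K !Pt_of4 -vec_of4_mul proj_eq_of4 => Cs.
  by apply/hasP; exists (omap to4 s); rewrite ?mem_line4.
move=> s _; have [t] := onto (omap of4 s).
rewrite -[t]omap_to4K !Pt_of4 -vec_of4_mul proj_eq_of4 => Cs.
apply/hasP; exists (mulvm4 (Pt4 (omap to4 t)) B) => //.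
exact: (map_f (fun t => mulvm4 (Pt4 t) B) (mem_line4 _)).
Qed.

Lemma normalized_Gq_signatures (A : 'M[F]_4) (x : 'rV[F]_4) s :
  in_Gq A -> Pt None *m A = Pt s ->
  point_signature (x *m A) = point_signature x /\
  plane_signature (x *m A^T) = plane_signature x.
Proof.
rewrite -[A]mx_of4K -[x]vec_of4K -[s]omap_to4K -[Pt None](Pt_of4 None) !Pt_of4.
move=> /in_Gq_of4/andP[into onto]; rewrite -vec_of4_mul => /vec_of4_inj C_oo.
rewrite -mx_of4_tr -!vec_of4_mul !point_signature_of4 !plane_signature_of4.
by apply: Gq4_signatures; rewrite // C_oo map_f ?mem_line4.
Qed.

Lemma Gq_signatures (A : 'M[F]_4) (x : 'rV[F]_4) : in_Gq A ->
  point_signature (x *m A) = point_signature x /\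
  plane_signature (x *m A^T) = plane_signature x.
Proof.
move=> GqA; have [s /proj_eqP[m m0 Em]] := GqA.2.1 None; have m'0 := invr_neq0 m0.
have normA : Pt None *m (m^-1 *: A) = Pt s by rewrite -scalemxAr Em scalerA mulVf // scale1r.
have [] := normalized_Gq_signatures x (in_GqZ m'0 GqA) normA.
by rewrite !linearZ /= point_signatureZ // plane_signatureZ // => -> ->.
Qed.

Lemma Gq_point_of_kind (A : 'M[F]_4) k (x : 'rV[F]_4) :
  in_Gq A -> point_of_kind k (x *m A) = point_of_kind k x.
Proof.
move=> GqA; apply: point_of_kind_signature; last by have [] := Gq_signatures x GqA.
by rewrite mulmx_free_eq0 // row_free_unit; case: GqA.
Qed.

Lemma Gq_plane_of_kind (A : 'M[F]_4) k (c : 'rV[F]_4) :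
  in_Gq A -> plane_of_kind k (c *m A^T) = plane_of_kind k c.
Proof.
move=> GqA; apply: plane_of_kind_signature; last by have [] := Gq_signatures c GqA.
by rewrite mulmx_free_eq0 // row_free_unit unitmx_tr; case: GqA.
Qed.

Lemma Gstar4_in_Gstar q : q \in Gstar4 -> in_Gstar (mx_of4 (Mstar4 q)).
Proof.
case: q => a b c d; rewrite mem_filter => /andP[det_n0 _].
exists (of4 a), (of4 b), (of4 c), (of4 d).
by rewrite det_of4 of4_eq0 Mabcd_of4.
Qed.

Lemma pt_orbit4_Gstar r x :
  pt_orbit4 r x -> exists2 M, in_Gstar M & proj_eq (vec_of4 r *m M) (vec_of4 x).
Proof.
case/hasP => q Gq rx; exists (mx_of4 (Mstar4 q)); first exact: Gstar4_in_Gstar.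
by rewrite -vec_of4_mul proj_eq_of4.
Qed.

Lemma pl_orbit4_Gstar r c :
  pl_orbit4 r c -> exists2 M, in_Gstar M & proj_eq (vec_of4 r *m M^T) (vec_of4 c).
Proof.
case/hasP => q Gq rc; exists (mx_of4 (Mstar4 q)); first exact: Gstar4_in_Gstar.
by rewrite -mx_of4_tr -vec_of4_mul proj_eq_of4.
Qed.

Lemma Gstar_point_transitive k (x y : 'rV[F]_4) :
  point_of_kind k x -> point_of_kind k y -> pt_orbit (@in_Gstar F) x y.
Proof.
rewrite -[x]vec_of4K -[y]vec_of4K !point_of_kind_of4 => kx ky.
have [M1 GsM1 E1] := pt_orbit4_Gstar (point_rep4_orbit kx).
have [M2 GsM2 E2] := pt_orbit4_Gstar (point_rep4_orbit ky).
exact: pt_orbit_Gstar_trans GsM1 GsM2 E1 E2.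
Qed.

Lemma Gstar_plane_transitive k (c c' : 'rV[F]_4) :
  plane_of_kind k c -> plane_of_kind k c' -> pl_orbit (@in_Gstar F) c c'.
Proof.
rewrite -[c]vec_of4K -[c']vec_of4K !plane_of_kind_of4 => kc kc'.
have [M1 GsM1 E1] := pl_orbit4_Gstar (plane_rep4_orbit kc).
have [M2 GsM2 E2] := pl_orbit4_Gstar (plane_rep4_orbit kc').
exact: pl_orbit_Gstar_trans GsM1 GsM2 E1 E2.
Qed.

Lemma point_kind_exists (x : 'rV[F]_4) : x != 0 -> exists k, point_of_kind k x.
Proof.
rewrite -[x]vec_of4K vec_of4_eq0 => nz_x.
have /allP/(_ _ (mem_vecs4 (vec_to4 x))) := point_kinds_exhaustive4.
by rewrite (negbTE nz_x) => /has_exists[k kx]; exists k; rewrite point_of_kind_of4.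
Qed.

Lemma plane_kind_exists (c : 'rV[F]_4) : c != 0 -> exists k, plane_of_kind k c.
Proof.
rewrite -[c]vec_of4K vec_of4_eq0 => nz_c.
have /allP/(_ _ (mem_vecs4 (vec_to4 c))) := plane_kinds_exhaustive4.
by rewrite (negbTE nz_c) => /has_exists[k kc]; exists k; rewrite plane_of_kind_of4.
Qed.

Lemma card_point_kind_of4 k : card_point_kind F k = count (point_of_kind4 k) vecs4.
Proof.
by rewrite /card_point_kind cardV_of4; apply: eq_count => v; rewrite /= point_of_kind_of4.
Qed.

Lemma card_plane_kind_of4 k : card_plane_kind F k = count (plane_of_kind4 k) vecs4.
Proof.
by rewrite /card_plane_kind cardV_of4; apply: eq_count => v; rewrite /= plane_of_kind_of4.
Qed.

Lemma point_kind_witness k : exists x : 'rV[F]_4, point_of_kind k x.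
Proof.
have : has (point_of_kind4 k) vecs4 by case: k; vm_compute.
by case/has_exists => v kv; exists (vec_of4 v); rewrite point_of_kind_of4.
Qed.

Lemma plane_kind_witness k : exists c : 'rV[F]_4, plane_of_kind k c.
Proof.
have : has (plane_of_kind4 k) vecs4 by case: k; vm_compute.
by case/has_exists => v kv; exists (vec_of4 v); rewrite plane_of_kind_of4.
Qed.

Section GroupsBetweenGstarAndGq.
Variable S : 'M[F]_4 -> Prop.
Hypothesis Gstar_sub_S : forall A, in_Gstar A -> S A.
Hypothesis S_sub_Gq : forall A, S A -> in_Gq A.

Lemma pt_orbit_kind k (x y : 'rV[F]_4) :
  point_of_kind k x -> pt_orbit S x y <-> point_of_kind k y.
Proof.
move=> kx; split=> [[A [SA /proj_eqP[m m0 ->]]] | ky].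
  by rewrite scalemxAr Gq_point_of_kind //; apply: in_GqZ => //; exact: S_sub_Gq.
have [A [GsA xAy]] := Gstar_point_transitive kx ky.
by exists A; split; first exact: Gstar_sub_S.
Qed.

Lemma pl_orbit_kind k (c c' : 'rV[F]_4) : plane_of_kind k c -> c' != 0 ->
  pl_orbit S c c' <-> plane_of_kind k c'.
Proof.
move=> kc nz_c'; have nz_c : c != 0 by case/andP: kc.
split=> [[A [SA inc]] | kc'].
  have GqA := S_sub_Gq SA; have [uA _] := GqA.
  move/(incid_mulmx_proj_eq uA nz_c nz_c'): inc => /proj_eqP[m m0 Ec].
  by rewrite -(Gq_plane_of_kind _ _ (in_GqZ m0 GqA)) linearZ /= -scalemxAr -Ec.
have [A [GsA inc]] := Gstar_plane_transitive kc kc'.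
by exists A; split; first exact: Gstar_sub_S.
Qed.

End GroupsBetweenGstarAndGq.

End FieldOfOrderFour.

Theorem theorem6p2 (F : finFieldType) (hF : #|F| = 4%N) :
  (forall x y : 'rV[F]_4, x != 0 -> y != 0 ->
     (pt_orbit (@in_Gq F) x y <-> pt_orbit (@in_Gstar F) x y)) /\
  (forall c c' : 'rV[F]_4, c != 0 -> c' != 0 ->
     (pl_orbit (@in_Gq F) c c' <-> pl_orbit (@in_Gstar F) c c')) /\
  (forall c : 'rV[F]_4, c != 0 -> exists k, plane_of_kind k c) /\
  (forall k : plane_kind, exists c0 : 'rV[F]_4, plane_of_kind k c0 /\
     forall c : 'rV[F]_4, c != 0 -> (pl_orbit (@in_Gq F) c0 c <-> plane_of_kind k c)) /\
  card_plane_kind F GammaPl = (3 * 5)%N /\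
  card_plane_kind F TwoC = (3 * 20)%N /\
  card_plane_kind F ThreeC = (3 * 10)%N /\
  card_plane_kind F OneBarC = (3 * 30)%N /\
  card_plane_kind F ZeroC = (3 * 20)%N /\
  (forall x : 'rV[F]_4, x != 0 -> exists k, point_of_kind k x) /\
  (forall k : point_kind, exists x0 : 'rV[F]_4, point_of_kind k x0 /\
     forall x : 'rV[F]_4, x != 0 -> (pt_orbit (@in_Gq F) x0 x <-> point_of_kind k x)) /\
  card_point_kind F CPt = (3 * 5)%N /\
  card_point_kind F TPt = (3 * 20)%N /\
  card_point_kind F ThreeG = (3 * 10)%N /\
  card_point_kind F OneG = (3 * 30)%N /\
  card_point_kind F ZeroG = (3 * 20)%N.
Proof.
have Gq_Gq (A : 'M[F]_4) : in_Gq A -> in_Gq A by [].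
have Gs_Gs (A : 'M[F]_4) : in_Gstar A -> in_Gstar A by [].
have Gs_Gq := @Gstar_sub_Gq F.
have Gq_pt := pt_orbit_kind hF Gs_Gq Gq_Gq; have Gs_pt := pt_orbit_kind hF Gs_Gs Gs_Gq.
have Gq_pl := pl_orbit_kind hF Gs_Gq Gq_Gq; have Gs_pl := pl_orbit_kind hF Gs_Gs Gs_Gq.
split=> [x y nz_x _ | ].
  have [k kx] := point_kind_exists hF nz_x.
  exact: iff_trans (Gq_pt _ _ y kx) (iff_sym (Gs_pt _ _ y kx)).
split=> [c c' nz_c nz_c' | ].
  have [k kc] := plane_kind_exists hF nz_c.
  exact: iff_trans (Gq_pl _ _ _ kc nz_c') (iff_sym (Gs_pl _ _ _ kc nz_c')).
split; first exact: plane_kind_exists.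
split=> [k | ].
  by have [c0 kc0] := plane_kind_witness hF k; exists c0; split=> // c; apply: Gq_pl.
rewrite !card_plane_kind_of4 // !card_point_kind_of4 //.
do 5 (split; first by vm_compute).
split; first exact: point_kind_exists.
split=> [k | ].
  by have [x0 kx0] := point_kind_witness hF k; exists x0; split=> // x _; apply: Gq_pt.
by vm_compute.
Qed.
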